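(* Let $(G,\gamma,b)$ be an RES-graph and let $(\hat G,\hat\gamma,b)$ be a reduction of $(G,\gamma,b)$ with $\tilde{\nu}(\hat G,\hat\gamma,b)\le\tilde{\nu}(G,\gamma,b)+1$. If $(\hat G,\hat\gamma,b)$ has a certificate, then $(G,\gamma,b)$ also has a certificate.
   Context: Graphs are finite and may have loops and multiple edges. Each edge is an unordered pair of half-edges; each half-edge is incident to a vertex, and a loop contributes $2$ to the degree of its vertex. An arc is an ordered pair of half-edges forming an edge, with tail (vertex of the first half-edge) and head (vertex of the second). A trail is a sequence of arcs with pairwise distinct edges, the head of each arc being the tail of the next. A circuit is a trail whose head equals its tail. A circuit hits $v$ if it contains an arc incident to $v$. A circuit-decomposition is a collection of circuits using each edge exactly once. A graph is Eulerian if it is connected and all degrees are even. A signature is a function $\gamma:E(G)\to\mathbb{Z}_2$. The weight of a trail is the $\mathbb{Z}_2$-sum of $\gamma$ over its edges, and a trail is zero or non-zero accordingly. Shifting at a vertex $v$ adds $1$ to the weight of every non-loop edge at $v$. A shifting of $\gamma$ is any signature obtained from $\gamma$ by a sequence of shiftings at vertices. An RES-graph is a triple $(G,\gamma,b)$ with $G$ Eulerian, $\gamma$ a signature, and $b\in V(G)$. The flooding number $\tilde{\nu}(G,\gamma,b)$ is the maximum size of a circuit-decomposition in which every circuit is non-zero and hits $b$; it is $0$ if none exists. For $X\subseteq V(G)$, $E(X)$ and $\delta(X)$ are the sets of edges with both ends, respectively exactly one end, in $X$. For an edge set $F$, $\gamma'(F)$ is the number of edges of $F$ with weight $1$ under $\gamma'$.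 A set $Y$ is $\gamma'$-odd if the parity of $\gamma'(E(Y)\cup\delta(Y))$ differs from that of $|\delta(Y)|/2$, and $\mathrm{odd}_{\gamma'}(G-X)$ is the number of components of $G-X$ whose vertex sets are $\gamma'$-odd. A certificate for $(G,\gamma,b)$ is a pair $(X,\gamma')$ where $\gamma'$ is a shifting of $\gamma$ and $b\in X\subseteq V(G)$, such that $$\tilde{\nu}(G,\gamma,b)=\gamma'(E(X))+\tfrac12|\delta(X)|-\mathrm{odd}_{\gamma'}(G-X).$$ Let $e=\{h,r\}$ be an edge of $G-b$. An $e$-reduction of $(G,\gamma,b)$ is any RES-graph $(\hat G,\hat\gamma,b)$ constructed as follows. Take new half-edges $h',r'$ at $b$ forming a transition $\{h',r'\}$ at $b$. The graph $\hat G$ is obtained from $G$ by deleting $e$ and adding the edges $\{h,h'\}$ and $\{r,r'\}$. The signature $\hat\gamma$ agrees with $\gamma$ on the other edges, and $\hat\gamma(\{h,h'\})+\hat\gamma(\{r,r'\})=\gamma(e)$ in $\mathbb{Z}_2$. A reduction of $(G,\gamma,b)$ is an $e$-reduction for some edge $e$ of $G-b$. *)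

From mathcomp Require Import all_boot all_order all_algebra.
From Stdlib Require Import ClassicalEpsilon.
Set Implicit Arguments. Unset Strict Implicit. Unset Printing Implicit Defensive.

(* A graph on vertex type V with edge type E: edge x consists of the two
   half-edges (x,false) and (x,true); [ends x d] is the vertex incident to
   half-edge (x,d). *)
Section Graphs.
Variables (V E : finType) (ends : E -> bool -> V).

Definition degree (v : V) : nat := #|[set h : E * bool | ends h.1 h.2 == v]|.

Definition adj (u v : V) : bool :=
  [exists x, ((ends x false == u) && (ends x true == v))
          || ((ends x false == v) && (ends x true == u))].

Definition eulerian : Prop :=
  (forall u v, connect adj u v) /\ (forall v, ~~ odd (degree v)).

(* arcs: (x, d) is the ordered pair of half-edges ((x,d),(x,~~d)) *)
Definition tail (a : E * bool) : V := ends a.1 a.2.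
Definition head (a : E * bool) : V := ends a.1 (~~ a.2).

Definition is_trail (s : seq (E * bool)) : bool :=
  uniq [seq a.1 | a <- s] &&
  (if s is a :: s' then path (fun a1 a2 => head a1 == tail a2) a s' else true).

Definition is_circuit (s : seq (E * bool)) : bool :=
  is_trail s && (if s is a :: s' then head (last a s') == tail a else false).

Definition hits (v : V) (s : seq (E * bool)) : bool :=
  has (fun a => (tail a == v) || (head a == v)) s.

Definition nonzero (gam : E -> bool) (s : seq (E * bool)) : bool :=
  odd (count (fun a => gam a.1) s).

Definition circuit_decomposition (D : seq (seq (E * bool))) : bool :=
  all is_circuit D && perm_eq (flatten [seq [seq a.1 | a <- c] | c <- D]) (enum E).

Definition flooding_decomposition (gam : E -> bool) (b : V)
    (D : seq (seq (E * bool))) : bool :=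
  circuit_decomposition D && all (fun c => nonzero gam c && hits b c) D.

Definition is_flooding_number (gam : E -> bool) (b : V) (n : nat) : Prop :=
  ((exists D, flooding_decomposition gam b D /\ size D = n) /\
   (forall D, flooding_decomposition gam b D -> size D <= n))
  \/ (n = 0 /\ forall D, ~ flooding_decomposition gam b D).

Definition flooding_number (gam : E -> bool) (b : V) : nat :=
  epsilon (inhabits 0) (is_flooding_number gam b).

(* shifting at v flips the weight of every non-loop edge at v *)
Definition shift (v : V) (gam : E -> bool) : E -> bool :=
  fun x => if (ends x false == v) (+) (ends x true == v) then ~~ gam x else gam x.

Definition is_shifting (gam gam' : E -> bool) : Prop :=
  exists s : seq V, gam' = foldl (fun g v => shift v g) gam s.

Definition inner_edges (X : {set V}) : {set E} :=
  [set x | (ends x false \in X) && (ends x true \in X)].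
Definition cut_edges (X : {set V}) : {set E} :=
  [set x | (ends x false \in X) != (ends x true \in X)].
Definition wcount (gam : E -> bool) (F : {set E}) : nat := #|[set x in F | gam x]|.

Definition is_odd_set (gam : E -> bool) (Y : {set V}) : bool :=
  odd (wcount gam (inner_edges Y :|: cut_edges Y)) != odd (#|cut_edges Y|./2).

Definition adj_out (X : {set V}) (u v : V) : bool :=
  (u \notin X) && (v \notin X) && adj u v.

Definition is_component_out (X : {set V}) (C : {set V}) : bool :=
  [exists u, (u \notin X) && (C == [set v | connect (adj_out X) u v])].

Definition odd_components (gam : E -> bool) (X : {set V}) : nat :=
  #|[set C : {set V} | is_component_out X C && is_odd_set gam C]|.

Local Open Scope ring_scope.
Definition is_certificate (gam : E -> bool) (b : V) (X : {set V})
    (gam' : E -> bool) : Prop :=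
  is_shifting gam gam' /\ b \in X /\
  (flooding_number gam b)%:Z =
    (wcount gam' (inner_edges X) + #|cut_edges X|./2)%:Z
    - (odd_components gam' X)%:Z.

Definition has_certificate (gam : E -> bool) (b : V) : Prop :=
  exists X gam', is_certificate gam b X gam'.
End Graphs.

(* e-reduction: delete e = {h,r} (h = (e,false), r = (e,true)) and add edges
   {h,h'} (inr true) and {r,r'} (inr false), with h', r' new half-edges at b
   (the "true" half-edge of each new edge). *)
Definition red_edge (E : finType) (e : E) : finType :=
  ({x : E | x != e} + bool)%type.

Definition red_ends (V E : finType) (ends : E -> bool -> V) (b : V) (e : E)
    (y : red_edge e) (d : bool) : V :=
  match y with
  | inl x => ends (val x) d
  | inr true => if d then b else ends e false
  | inr false => if d then b else ends e true
  end.

From Pilot Require Import Defs.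
From mathcomp Require Import all_boot all_order all_algebra.
From mathcomp Require Import zify.
From Stdlib Require Import ClassicalEpsilon Classical.
Set Implicit Arguments. Unset Strict Implicit. Unset Printing Implicit Defensive.

(* A circuit crosses every cut an even number of times.  Hence shifting does not
   change which circuits are non-zero, and a circuit through b that does not cross
   delta(Y), for Y not containing b, avoids Y.  Counting circuit by circuit the
   weight inside X and the crossings of delta(X) gives weak duality: for every
   shifting gamma' and every X containing b, a circuit decomposition whose circuits
   all hit b has at most gamma'(E(X)) + |delta(X)|/2 - odd(G-X) non-zero circuits;
   moreover this bound has the parity of gamma(E), that is, of the flooding number.
   A certificate (X, gamma^') of the reduction lifts to (X, gamma') by replaying
   the same shifts, and the bound for (X, gamma') exceeds the one for (X, gamma^')
   by at most one, because only the components containing the ends of e change.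
   Parity rules out flooding(G^) = flooding(G) + 1, so the bound for G is at most
   flooding(G) + 1, and parity again pins it to flooding(G). *)

Local Notation edges C := [seq a.1 | a <- C].

Lemma card_set_count (T : finType) (P : pred T) : #|[set x | P x]| = count P (enum T).
Proof.
rewrite cardsE cardE /enum_mem size_filter; congr (count _ _).
by rewrite -{1}(filter_predT (Finite.enum T)); apply: eq_filter.
Qed.

Lemma card_set_sum (T : finType) (P : pred T) : #|[set x | P x]| = \sum_x (P x : nat).
Proof. by rewrite -sum1dep_card big_mkcond. Qed.

Lemma odd_count_addb (T : Type) (p q : pred T) s :
  odd (count (fun x => p x (+) q x) s) = odd (count p s) (+) odd (count q s).
Proof.
elim: s => //= x s IH; rewrite !oddD IH.
by case: (p x); case: (q x); case: (odd (count p s)); case: (odd (count q s)).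
Qed.

Lemma even_sum_nat (I : Type) (r : seq I) (P : pred I) (F : I -> nat) :
  (forall i, P i -> ~~ odd (F i)) -> ~~ odd (\sum_(i <- r | P i) F i).
Proof.
move=> h; apply: (big_ind (fun n => ~~ odd n)) => //.
by move=> m n hm hn; rewrite oddD (negbTE hm) (negbTE hn).
Qed.

Lemma sum_half_nat (I : Type) (r : seq I) (P : pred I) (F : I -> nat) :
  (forall i, P i -> ~~ odd (F i)) ->
  \sum_(i <- r | P i) (F i)./2 = (\sum_(i <- r | P i) F i)./2.
Proof.
move=> h; suff -> : \sum_(i <- r | P i) F i = (\sum_(i <- r | P i) (F i)./2).*2.
  by rewrite doubleK.
rewrite (big_morph double doubleD (erefl 0.*2)).
by apply: eq_bigr => i hi; rewrite even_halfK ?h.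
Qed.

Lemma odd_sum_nat (I : Type) (r : seq I) (F : I -> nat) :
  odd (\sum_(i <- r) F i) = odd (\sum_(i <- r) (odd (F i) : nat)).
Proof.
apply: (big_ind2 (fun m n => odd m = odd n)) => // [m1 m2 n1 n2 h1 h2|i].
  by rewrite !oddD h1 h2.
by case: (odd (F i)).
Qed.

Section Circuits.
Variables (V E : finType) (ends : E -> bool -> V).
Implicit Types (s : seq (E * bool)) (Y : {set V}) (g : E -> bool).
Local Notation atail := (Defs.tail ends).
Local Notation ahead := (Defs.head ends).

Definition arc_link (a1 a2 : E * bool) := ahead a1 == atail a2.

Lemma is_circuitE s :
  is_circuit ends s = [&& s != [::], uniq (edges s) & cycle arc_link s].
Proof. by case: s => [|a s] //=; rewrite /is_circuit /is_trail /= rcons_path andbA. Qed.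

Lemma is_circuit_rot n s : is_circuit ends s -> is_circuit ends (rot n s).
Proof.
rewrite !is_circuitE => /and3P [hs hu hc].
by rewrite map_rot rot_uniq rot_cycle hu hc -size_eq0 size_rot size_eq0 hs.
Qed.

Lemma cut_arcE Y a : (a.1 \in cut_edges ends Y) = ((atail a \in Y) != (ahead a \in Y)).
Proof. by rewrite inE /Defs.tail /Defs.head; case: a => x [] //=; rewrite eq_sym. Qed.

Lemma odd_cut_path Y a s : path arc_link a s ->
  odd (count (mem (cut_edges ends Y)) (edges (a :: s)))
  = ((atail a \in Y) != (ahead (last a s) \in Y)).
Proof.
elim: s a => [|a' s IH] a /=.
  by rewrite addn0 cut_arcE; case: (_ != _).
move=> /andP [/eqP ha hp]; rewrite oddD; move: (IH a' hp) => /= ->.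
rewrite cut_arcE -ha.
by case: (atail a \in Y); case: (ahead a \in Y); case: (ahead _ \in Y).
Qed.

Lemma even_cut_circuit Y s : is_circuit ends s ->
  ~~ odd (count (mem (cut_edges ends Y)) (edges s)).
Proof.
case: s => [|a s] //; rewrite /is_circuit /is_trail => /andP [/andP [_ hp] /eqP hl].
by rewrite odd_cut_path // hl; case: (_ \in Y).
Qed.

Lemma nonzeroE g s : nonzero g s = odd (count g (edges s)).
Proof. by rewrite /nonzero count_map. Qed.

Lemma path_no_cut Y a s : path arc_link a s ->
  count (mem (cut_edges ends Y)) (edges (a :: s)) = 0 ->
  {in a :: s, forall a', (atail a' \in Y) = (atail a \in Y)
                      /\ (ahead a' \in Y) = (atail a \in Y)}.
Proof.
elim: s a => [|a1 s IH] a /=.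
  rewrite addn0 cut_arcE => _ h a'; rewrite inE => /eqP ->; split => //.
  by move: h; case: (_ \in Y); case: (_ \in Y).
move=> /andP [/eqP ha hp] /eqP; rewrite addn_eq0 cut_arcE eqb0 negbK => /andP [/eqP h1 /eqP h2].
move=> a'; rewrite inE => /orP [/eqP -> //|ha'].
by have [-> ->] := IH a1 hp h2 a' ha'; rewrite -ha h1.
Qed.

(* Shifting at v adds the indicator of the cut around v, which every circuit crosses evenly. *)
Lemma nonzero_shift v g s : is_circuit ends s -> nonzero (shift ends v g) s = nonzero g s.
Proof.
move=> hc; have hcut : odd (count (fun a => a.1 \in cut_edges ends [set v]) s) = false.
  by have := even_cut_circuit [set v] hc; rewrite count_map => /negbTE.
rewrite /nonzero (eq_count (a2 := fun a => g a.1 (+) (a.1 \in cut_edges ends [set v]))).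
  by rewrite odd_count_addb hcut addbF.
move=> [x d] /=; rewrite /shift !inE.
by case: (ends x false == v); case: (ends x true == v); case: (g x).
Qed.

Lemma nonzero_shifting g g' s : is_shifting ends g g' -> is_circuit ends s ->
  nonzero g' s = nonzero g s.
Proof. by move=> [l ->] hc; elim: l g => //= v l IH g; rewrite IH nonzero_shift. Qed.

Lemma count_decomposition D (P : pred E) : circuit_decomposition ends D ->
  \sum_(C <- D) count P (edges C) = #|[set x | P x]|.
Proof.
move=> /andP [_ hp]; rewrite card_set_count -(permP hp) count_flatten.
elim: D {hp} => [|C D IH]; first by rewrite big_nil.
by rewrite big_cons /= IH.
Qed.

Lemma even_cut Y D : circuit_decomposition ends D -> ~~ odd #|cut_edges ends Y|.
Proof.
move=> hD; rewrite -cardsE -(count_decomposition _ hD) big_seq.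
move: hD => /andP [/allP hc _]; apply: even_sum_nat => C hC.
exact: even_cut_circuit (hc C hC).
Qed.

Lemma odd_card_shifting g g' D : is_shifting ends g g' -> circuit_decomposition ends D ->
  odd #|[set x | g' x]| = odd (count (nonzero g) D).
Proof.
move=> hsh hD; rewrite -(count_decomposition _ hD) odd_sum_nat -sum1_count [in RHS]big_mkcond.
rewrite big_seq [in RHS]big_seq; congr (odd _); apply: eq_bigr => C hC.
move: hD => /andP [/allP hc _].
by rewrite -(nonzero_shifting hsh (hc C hC)) nonzeroE; case: (odd _).
Qed.

End Circuits.

Section Components.
Variables (V E : finType) (ends : E -> bool -> V).
Implicit Types (X Y : {set V}) (u v z : V) (x : E).

Definition component X v := [set z | connect (adj_out ends X) v z].
Definition components X := [set component X v | v in ~: X].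
Definition touches Y x := (ends x false \in Y) || (ends x true \in Y).

Lemma adjC u v : adj ends u v = adj ends v u.
Proof. by apply/existsP/existsP => -[x hx]; exists x; rewrite orbC. Qed.

Lemma adj_outC X u v : adj_out ends X u v = adj_out ends X v u.
Proof. by rewrite /adj_out adjC; case: (u \in X); case: (v \in X). Qed.

Lemma adj_out_edge X x : ends x false \notin X -> ends x true \notin X ->
  adj_out ends X (ends x false) (ends x true).
Proof. by move=> h0 h1; rewrite /adj_out h0 h1; apply/existsP; exists x; rewrite !eqxx. Qed.

Lemma component_refl X v : v \in component X v.
Proof. by rewrite inE connect0. Qed.

Lemma component_notin X v z : v \notin X -> z \in component X v -> z \notin X.
Proof.
move=> hv; rewrite inE => hc.
have hcl : closed (adj_out ends X) (mem (~: X)).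
  by move=> x y /andP [/andP [hx hy] _]; rewrite !inE hx hy.
by have := closed_connect hcl hc; rewrite !inE hv => <-.
Qed.

Lemma component_eq X v z : z \in component X v -> component X z = component X v.
Proof.
rewrite inE => hc; apply/setP => t; rewrite !inE.
by rewrite (same_connect (sym_connect_sym (adj_outC X)) hc).
Qed.

Lemma component_ends_eq X x : ends x false \notin X -> ends x true \notin X ->
  component X (ends x true) = component X (ends x false).
Proof. by move=> h0 h1; apply: component_eq; rewrite inE connect1 // adj_out_edge. Qed.

Lemma in_components X Y z : Y \in components X ->
  (z \in Y) = (z \notin X) && (Y == component X z).
Proof.
move=> /imsetP [y0]; rewrite inE => hy0 ->; apply/idP/idP.
  by move=> hz; rewrite (component_notin hy0 hz) (component_eq hz) eqxx.
by move=> /andP [_ /eqP ->]; apply: component_refl.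
Qed.

Lemma component_in_components X v : v \notin X -> component X v \in components X.
Proof. by move=> hv; apply/imsetP; exists v; rewrite ?inE. Qed.

Lemma is_component_outE X Y : is_component_out ends X Y = (Y \in components X).
Proof.
apply/existsP/imsetP => -[u].
  by move=> /andP [hu /eqP ->]; exists u; rewrite ?inE.
by rewrite inE => hu ->; exists u; rewrite hu eqxx.
Qed.

Lemma sum_components_eq1 X v : v \notin X ->
  \sum_(Y in components X) (Y == component X v) = 1.
Proof.
move=> hv; rewrite (bigD1 (component X v)) ?component_in_components //= eqxx.
by rewrite big1 // => Y /andP [_ /negbTE ->].
Qed.

Lemma sum_components_touches X x :
  \sum_(Y in components X) touches Y x = ~~ (x \in inner_edges ends X).
Proof.
under eq_bigr => Y hY do rewrite /touches !(in_components _ hY).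
rewrite inE; case h0: (ends x false \in X); case h1: (ends x true \in X) => /=.
- by rewrite big1.
- by rewrite sum_components_eq1 ?h1.
- by under eq_bigr do rewrite orbF; rewrite sum_components_eq1 ?h0.
- rewrite component_ends_eq ?h0 ?h1 //.
  by under eq_bigr do rewrite orbb; rewrite sum_components_eq1 ?h0.
Qed.

Lemma sum_components_cut X x :
  \sum_(Y in components X) (x \in cut_edges ends Y) = (x \in cut_edges ends X).
Proof.
under eq_bigr => Y hY do rewrite inE !(in_components _ hY).
rewrite inE; case h0: (ends x false \in X); case h1: (ends x true \in X) => /=.
- by rewrite big1.
- by under eq_bigr do rewrite eq_sym eqbF_neg negbK; rewrite sum_components_eq1 ?h1.
- by under eq_bigr do rewrite eqbF_neg negbK; rewrite sum_components_eq1 ?h0.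
- by rewrite component_ends_eq ?h0 ?h1 // big1 // => Y _; rewrite eqxx.
Qed.

Lemma count_components X (Q : pred E) s :
  count Q s = count (fun x => (x \in inner_edges ends X) && Q x) s +
    \sum_(Y in components X) count (fun x => touches Y x && Q x) s.
Proof.
elim: s => [|x s IH] /=; first by rewrite big1.
rewrite big_split /= {1}IH addnACA; congr (_ + _).
case: (Q x) => /=; last by rewrite andbF big1 // => Y _; rewrite andbF.
by under eq_bigr do rewrite andbT; rewrite sum_components_touches; case: (_ \in _).
Qed.

Lemma count_cut_components X s :
  count (mem (cut_edges ends X)) s =
    \sum_(Y in components X) count (mem (cut_edges ends Y)) s.
Proof.
elim: s => [|x s IH] /=; first by rewrite big1.
by rewrite big_split /= IH sum_components_cut.
Qed.

Lemma odd_componentsE g X :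
  odd_components ends g X = \sum_(Y in components X) is_odd_set ends g Y.
Proof.
rewrite /odd_components -sum1dep_card big_mkcond [RHS]big_mkcond /=.
apply: eq_bigr => Y _; rewrite is_component_outE.
by case: (Y \in components X); case: (is_odd_set _ _ _).
Qed.

Lemma inner_cut_touchesE Y :
  inner_edges ends Y :|: cut_edges ends Y = [set x | touches Y x].
Proof. by apply/setP => x; rewrite !inE /touches; case: (_ \in Y); case: (_ \in Y). Qed.

Lemma circuit_no_cut_avoids Y b C : is_circuit ends C -> hits ends b C -> b \notin Y ->
  count (mem (cut_edges ends Y)) (edges C) = 0 -> count (touches Y) (edges C) = 0.
Proof.
case: C => [|a s] //; rewrite /is_circuit /is_trail => /andP [/andP [_ hp] _] hb hbY h0.
have hn := path_no_cut hp h0.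
have ha : (Defs.tail ends a \in Y) = false.
  move: hb => /hasP [a' ha' /orP [/eqP hb|/eqP hb]].
    by have [<- _] := hn _ ha'; rewrite hb (negbTE hbY).
  by have [_ <-] := hn _ ha'; rewrite hb (negbTE hbY).
apply/eqP; rewrite -leqn0 leqNgt -has_count; apply/hasP => -[x /mapP [a' ha' ->]].
have [h1 h2] := hn _ ha'; move: h1 h2; rewrite /touches /Defs.tail /Defs.head ha.
by case: a' ha' => x' [] _ /= -> ->.
Qed.

End Components.

Definition cert_sum (V E : finType) (ends : E -> bool -> V) (g : E -> bool) (X : {set V}) :=
  wcount g (inner_edges ends X) + #|cut_edges ends X|./2.

Lemma add_parity_leq (a k m : nat) (nz : bool) :
  m <= k -> nz = odd (a + k + m) -> nz + m <= a + k.
Proof.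
have hk : k <= a + k by apply: leq_addl.
case: nz => hmk; last by move=> _; apply: leq_trans hk.
move=> /esym hodd; rewrite add1n ltn_neqAle (leq_trans hmk hk) andbT.
by apply: contraTneq hodd => <-; rewrite addnn odd_double.
Qed.

Section WeakDuality.
Variables (V E : finType) (ends : E -> bool -> V) (g g' : E -> bool).
Variables (X : {set V}) (b : V) (D : seq (seq (E * bool))).
Hypotheses (hsh : is_shifting ends g g') (hbX : b \in X).
Hypotheses (hD : circuit_decomposition ends D) (hhit : all (hits ends b) D).

Let circuitD C : C \in D -> is_circuit ends C.
Proof. by move=> hC; move: hD => /andP [/allP /(_ C hC)]. Qed.

Let crossings (C : seq (E * bool)) (Y : {set V}) : nat :=
  count (mem (cut_edges ends Y)) (edges C).
Let touch_weight (C : seq (E * bool)) (Y : {set V}) : nat :=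
  count (fun x => touches ends Y x && g' x) (edges C).
Let inner_weight (C : seq (E * bool)) : nat :=
  count (fun x => (x \in inner_edges ends X) && g' x) (edges C).
(* C contributes [touch_weight C Y] to gamma'(E(Y) u delta(Y)) and
   [crossings C Y]/2 to |delta(Y)|/2; its defect at Y is the parity mismatch. *)
Let defect (C : seq (E * bool)) (Y : {set V}) : bool :=
  odd (touch_weight C Y) != odd (crossings C Y)./2.

Let even_crossings C Y : C \in D -> ~~ odd (crossings C Y).
Proof. by move=> /circuitD; apply: even_cut_circuit. Qed.

(* A circuit crossing Y has at least two crossings; one that does not cross Y
   avoids Y altogether, because it passes through b. *)
Let defect_le C Y : C \in D -> Y \in components ends X -> defect C Y <= (crossings C Y)./2.
Proof.
move=> hC hY; case hc: (crossings C Y) => [|n]; last first.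
  by have := even_crossings Y hC; rewrite hc; case: n {hc} => // n _; case: (defect C Y).
have hbY : b \notin Y by rewrite (in_components _ hY) hbX.
have := circuit_no_cut_avoids (circuitD hC) (allP hhit C hC) hbY hc.
rewrite /defect /touch_weight hc => h0.
suff -> : count (fun x => touches ends Y x && g' x) (edges C) = 0 by [].
by apply/eqP; rewrite -leqn0 -h0; apply: sub_count => x /andP [].
Qed.

Let circuit_bound C : C \in D ->
  nonzero g C + \sum_(Y in components ends X) defect C Y
    <= inner_weight C + (crossings C X)./2.
Proof.
move=> hC; have hX : (crossings C X)./2 = \sum_(Y in components ends X) (crossings C Y)./2.
  by rewrite /crossings count_cut_components sum_half_nat // => Y _; apply: even_crossings.
apply: add_parity_leq.
  by rewrite hX; apply: leq_sum => Y hY; apply: defect_le.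
have hev : ~~ odd (\sum_(Y in components ends X)
    (touch_weight C Y + (crossings C Y)./2 + defect C Y)).
  apply: even_sum_nat => Y _; rewrite /defect !oddD.
  by case: (odd (touch_weight C Y)); case: (odd (crossings C Y)./2).
rewrite -(nonzero_shifting hsh (circuitD hC)) nonzeroE (count_components ends X) hX.
move: hev; rewrite !big_split /= !oddD.
by case: (odd (inner_weight C)); case: (odd (\sum_(Y in _) touch_weight C Y));
  case: (odd (\sum_(Y in _) (crossings C Y)./2)); case: (odd (\sum_(Y in _) defect C Y)).
Qed.

Let odd_set_le_defects Y :
  Y \in components ends X -> is_odd_set ends g' Y <= \sum_(C <- D) defect C Y.
Proof.
move=> hY; rewrite /is_odd_set inner_cut_touchesE.
have -> : wcount g' [set x | touches ends Y x] = \sum_(C <- D) touch_weight C Y.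
  by rewrite /touch_weight (count_decomposition _ hD); apply: eq_card => x; rewrite !inE.
have -> : #|cut_edges ends Y|./2 = \sum_(C <- D) (crossings C Y)./2.
  rewrite -cardsE -(count_decomposition _ hD) !big_seq sum_half_nat // => C.
  exact: even_crossings.
have hev : ~~ odd (\sum_(C <- D) (touch_weight C Y + (crossings C Y)./2 + defect C Y)).
  apply: even_sum_nat => C _; rewrite /defect !oddD.
  by case: (odd (touch_weight C Y)); case: (odd (crossings C Y)./2).
move: hev; rewrite !big_split /= !oddD.
case: (odd (\sum_(C <- D) touch_weight C Y)); case: (odd (\sum_(C <- D) (crossings C Y)./2));
  by case: (\sum_(C <- D) defect C Y) => [|n] //=; rewrite ?oddS.
Qed.

Lemma weak_duality : count (nonzero g) D + odd_components ends g' X <= cert_sum ends g' X.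
Proof.
have hodd : odd_components ends g' X
    <= \sum_(C <- D) \sum_(Y in components ends X) defect C Y.
  rewrite odd_componentsE exchange_big /=; apply: leq_sum => Y; exact: odd_set_le_defects.
have hsum : cert_sum ends g' X = \sum_(C <- D) (inner_weight C + (crossings C X)./2).
  rewrite big_split /=; congr (_ + _).
    by rewrite /inner_weight (count_decomposition _ hD); apply: eq_card => x; rewrite !inE.
  rewrite -cardsE -(count_decomposition _ hD) !big_seq sum_half_nat // => C.
  exact: even_crossings.
rewrite -sum1_count big_mkcond hsum /=; apply: leq_trans (leq_add (leqnn _) hodd) _.
by rewrite -big_split !big_seq; apply: leq_sum => C; apply: circuit_bound.
Qed.

Lemma odd_cert_sum :
  odd (cert_sum ends g' X + odd_components ends g' X) = odd #|[set x | g' x]|.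
Proof.
have hcut : #|cut_edges ends X|./2 = \sum_(Y in components ends X) #|cut_edges ends Y|./2.
  rewrite sum_half_nat => [|Y _]; last exact: even_cut hD.
  congr half; rewrite -cardsE card_set_count count_cut_components; apply: eq_bigr => Y _.
  by rewrite -cardsE card_set_count.
have hg : #|[set x | g' x]| = wcount g' (inner_edges ends X) +
    \sum_(Y in components ends X) wcount g' (inner_edges ends Y :|: cut_edges ends Y).
  rewrite card_set_count (count_components ends X) /wcount card_set_count.
  congr (_ + _); apply: eq_bigr => Y _; rewrite inner_cut_touchesE card_set_count.
  by apply: eq_count => x; rewrite inE.
have hev : ~~ odd (\sum_(Y in components ends X)
    (wcount g' (inner_edges ends Y :|: cut_edges ends Y) + #|cut_edges ends Y|./2
      + is_odd_set ends g' Y)).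
  apply: even_sum_nat => Y _; rewrite /is_odd_set !oddD.
  by case: (odd (wcount _ _)); case: (odd _./2).
move: hev; rewrite !big_split /= /cert_sum hg hcut odd_componentsE !oddD.
by case: (odd (wcount g' (inner_edges ends X))); case: (odd (\sum_(Y in _) wcount _ _));
  case: (odd (\sum_(Y in _) _./2)); case: (odd (\sum_(Y in _) is_odd_set _ _ _)).
Qed.

End WeakDuality.

Lemma ex_max_bounded (P : nat -> Prop) m n0 : P n0 -> (forall k, P k -> k <= m) ->
  exists n, P n /\ forall k, P k -> k <= n.
Proof.
elim: m n0 => [|m IH] n0 hn0 hb.
  by exists n0; split => // k /hb; rewrite leqn0 => /eqP ->.
case: (classic (P m.+1)) => hm; first by exists m.+1; split => // k /hb.
apply: (IH n0 hn0) => k hk; move: (hb k hk); rewrite leq_eqVlt => /orP [/eqP hkm|//].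
by move: hk; rewrite hkm.
Qed.

Lemma count_subset_uniq (T : finType) (A : {set T}) s :
  uniq s -> {subset A <= s} -> count (mem A) s = #|A|.
Proof.
move=> hu hs; rewrite -size_filter -(card_uniqP (filter_uniq _ hu)).
apply: eq_card => x; rewrite mem_filter; apply/andP/idP => [[hx _] //|hx].
by split; [exact: hx | exact: hs].
Qed.

Section FloodingNumber.
Variables (V E : finType) (ends : E -> bool -> V).
Implicit Types (g : E -> bool) (b : V).

Lemma flooding_decomposition_size g b D :
  flooding_decomposition ends g b D -> size D <= #|E|.
Proof.
move=> /andP [/andP [hc hp] _]; rewrite cardT -(perm_size hp).
elim: D hc {hp} => //= C D IH /andP [hC hD]; rewrite size_cat size_map.
by case: C hC => // a C _; rewrite /= ltnS (leq_trans (IH hD)) // leq_addl.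
Qed.

Lemma flooding_numberP g b : is_flooding_number ends g b (flooding_number ends g b).
Proof.
apply: epsilon_spec.
case: (classic (exists D, flooding_decomposition ends g b D)) => [[D hD]|hn]; last first.
  by exists 0; right; split => // D hD; apply: hn; exists D.
pose P n := exists D, flooding_decomposition ends g b D /\ size D = n.
have hP : forall k, P k -> k <= #|E| by move=> k [D' [h <-]]; apply: flooding_decomposition_size h.
have [n [[D' [hD' hs]] hmax]] := ex_max_bounded (ex_intro _ D (conj hD erefl) : P _) hP.
exists n; left; split; first by exists D'.
by move=> D2 h2; apply: hmax; exists D2.
Qed.

Lemma odd_card_flooding_number g b : 0 < flooding_number ends g b ->
  odd #|[set x | g x]| = odd (flooding_number ends g b).
Proof.
case: (flooding_numberP g b) => [[[D [/andP [hD hall] <-]] _] _|[-> //]].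
rewrite (odd_card_shifting (D := D) (g := g) _ hD); last by exists [::].
by congr odd; apply/eqP; rewrite -all_count; apply: sub_all hall => C /andP [].
Qed.

End FloodingNumber.

Section EulerTour.
Variables (V E : finType) (ends : E -> bool -> V).
Local Notation atail := (Defs.tail ends).
Local Notation ahead := (Defs.head ends).

Lemma trail_size_le s : is_trail ends s -> size s <= #|E|.
Proof. by move=> /andP [hu _]; rewrite -(size_map fst) -(card_uniqP hu) max_card. Qed.

Lemma rcons_trail a s x d : is_trail ends (a :: s) -> x \notin edges (a :: s) ->
  ends x d = ahead (last a s) -> is_trail ends (rcons (a :: s) (x, d)).
Proof.
rewrite /is_trail => /andP [hu hp] hx hd.
by rewrite map_rcons rcons_uniq hx hu /= -cats1 cat_path hp /= andbT /Defs.tail /= hd.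
Qed.

Lemma odd_degree_cut v : odd (degree ends v) = odd #|cut_edges ends [set v]|.
Proof.
rewrite /degree card_set_sum -(pair_bigA _ (fun x d => (ends (x, d).1 (x, d).2 == v) : nat)).
rewrite -cardsE card_set_sum [LHS]odd_sum_nat [RHS]odd_sum_nat; congr (odd _).
apply: eq_bigr => x _; rewrite big_bool !inE /=.
by case: (ends x true == v); case: (ends x false == v).
Qed.

Section MaximalTrail.
Hypothesis heul : eulerian ends.
Variables (a : E * bool) (s : seq (E * bool)).
Hypothesis trail : is_trail ends (a :: s).
Hypothesis maximal : forall t, is_trail ends t -> size t <= size (a :: s).

(* Otherwise the last vertex has an unused edge, by parity of its degree. *)
Lemma maximal_trail_closed : ahead (last a s) = atail a.
Proof.
apply/eqP/negPn/negP => hne; set t := ahead (last a s) in hne.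
have hodd : odd (count (mem (cut_edges ends [set t])) (edges (a :: s))).
  move: trail => /andP [_ hp]; rewrite odd_cut_path // !inE eqxx.
  by rewrite [atail a == t]eq_sym (negbTE hne).
have [x hx hxT] : exists2 x, x \in cut_edges ends [set t] & x \notin edges (a :: s).
  apply/exists_inP; apply/negP => /exists_inP hn; move: hodd.
  rewrite count_subset_uniq; first by rewrite -odd_degree_cut (negbTE (heul.2 t)).
    by case/andP: trail.
  by move=> x hx; apply/negPn/negP => hxT; apply: hn; exists x.
have [d hd] : exists d, ends x d = t.
  move: hx; rewrite !inE; case: (ends x false =P t) => [h _|_ h]; first by exists false.
  by exists true; apply/eqP; move: h; case: (_ == t).
by have := maximal (rcons_trail trail hxT hd); rewrite size_rcons ltnn.
Qed.

Lemma maximal_trail_circuit : is_circuit ends (a :: s).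
Proof. by rewrite /is_circuit trail maximal_trail_closed eqxx. Qed.

(* Rotating the circuit to start at a', an unused edge at the tail of a' would extend it. *)
Lemma unused_edge_avoids a' y d : a' \in a :: s -> y \notin edges (a :: s) ->
  ends y d != atail a'.
Proof.
case/rot_to => i s' hrot hy; apply/eqP => hyd.
have := is_circuit_rot i maximal_trail_circuit; rewrite hrot => /andP [htr /eqP hcl].
have hy' : y \notin edges (a' :: s') by rewrite -hrot map_rot mem_rot.
have := maximal (rcons_trail htr hy' (etrans hyd (esym hcl))).
by rewrite size_rcons -hrot size_rot ltnn.
Qed.

Lemma maximal_trail_covers : perm_eq (edges (a :: s)) (enum E).
Proof.
apply: uniq_perm; [by case/andP: trail | exact: enum_uniq | move=> x0].
rewrite mem_enum; apply/negPn/negP => hx0.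
pose S := [set v | has (fun a' => atail a' == v) (a :: s)].
have hcyc : cycle (arc_link ends) (a :: s).
  by move: maximal_trail_circuit; rewrite is_circuitE => /and3P [].
have arcS a' : a' \in a :: s -> atail a' \in S /\ ahead a' \in S.
  move=> ha'; split; rewrite inE; apply/hasP; first by exists a'.
  by exists (next (a :: s) a'); rewrite ?mem_next // eq_sym; apply: next_cycle hcyc ha'.
have unusedS x d : x \notin edges (a :: s) -> ends x d \notin S.
  move=> hx; rewrite inE; apply/hasP => -[a' ha' /eqP hv].
  by move: (unused_edge_avoids d ha' hx); rewrite hv eqxx.
have hS x d : ends x d \in S -> ends x (~~ d) \in S.
  case hx: (x \in edges (a :: s)); last by rewrite (negbTE (unusedS x d (negbT hx))).
  move: hx => /mapP [a' ha' ->]; have [] := arcS a' ha'.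
  by case: a' ha' => x' [] _; rewrite /Defs.tail /Defs.head /=; case: d.
have hclo : closed (adj ends) (mem S).
  move=> u v /existsP [x /orP [] /andP [/eqP <- /eqP <-]];
    by apply/idP/idP => h; have := hS _ _ h.
have := closed_connect hclo (heul.1 (atail a) (ends x0 false)).
by rewrite (arcS a (mem_head _ _)).1 (negbTE (unusedS x0 false hx0)).
Qed.

End MaximalTrail.

Lemma euler_tour (e0 : E) : eulerian ends ->
  exists T, is_circuit ends T /\ perm_eq (edges T) (enum E).
Proof.
move=> heul; pose P n := exists t, is_trail ends t /\ size t = n.
have hP k : P k -> k <= #|E| by move=> [t [ht <-]]; apply: trail_size_le.
have h1 : P 1 by exists [:: (e0, false)].
have [n [[[|a s] [ht hsz]] hmax]] := ex_max_bounded h1 hP.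
  by move: (hmax 1 h1); rewrite -hsz.
have maximal t : is_trail ends t -> size t <= size (a :: s).
  by move=> htr; rewrite hsz; apply: hmax; exists t.
exists (a :: s); split; first exact: maximal_trail_circuit maximal.
exact: maximal_trail_covers maximal.
Qed.

End EulerTour.

Section EulerianBound.
Variables (V E : finType) (ends : E -> bool -> V).
Hypothesis heul : eulerian ends.
Variables (b v : V).
Hypothesis hvb : v != b.

Lemma exists_edge_at : exists x, (ends x false == b) || (ends x true == b).
Proof.
have /connectP [[|y p] /= hp hl] := heul.1 b v; first by move: hvb; rewrite hl eqxx.
case/andP: hp => /existsP [x hx] _; exists x.
by case/orP: hx => /andP [h1 h2]; rewrite ?h1 ?h2 ?orbT.
Qed.

(* With no flooding decomposition, an Euler tour through b is a zero circuit. *)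
Lemma flooding_witness g : exists D, [/\ circuit_decomposition ends D,
  all (hits ends b) D & count (nonzero g) D = flooding_number ends g b].
Proof.
case: (flooding_numberP ends g b) => [[[D [/andP [hD hall] hs]] _]|[hN0 hnone]].
  exists D; split => //; first by apply: sub_all hall => C /andP [].
  by rewrite -hs; apply/eqP; rewrite -all_count; apply: sub_all hall => C /andP [].
have [x hx] := exists_edge_at.
have [T [hT hp]] := euler_tour x heul.
have hD : circuit_decomposition ends [:: T] by rewrite /circuit_decomposition /= hT /= cats0.
have hhit : hits ends b T.
  have /mapP [[x' d] ha /= hxx'] : x \in edges T by rewrite (perm_mem hp) mem_enum.
  apply/hasP; exists (x', d) => //; move: hx; rewrite /Defs.tail /Defs.head hxx' /=.
  by case: d {ha}; rewrite // orbC.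
exists [:: T]; rewrite /= hhit hN0 addn0; split => //.
case hnz: (nonzero g T) => //; case: (hnone [:: T]).
by rewrite /flooding_decomposition hD /= hnz hhit.
Qed.

Lemma odd_card_flooding_number_eulerian g :
  odd #|[set x | g x]| = odd (flooding_number ends g b).
Proof.
have [D [hD _ <-]] := flooding_witness g.
by apply: odd_card_shifting hD; exists [::].
Qed.

Lemma flooding_number_cert_sum g g' (X : {set V}) : is_shifting ends g g' -> b \in X ->
  flooding_number ends g b + odd_components ends g' X <= cert_sum ends g' X /\
  odd (cert_sum ends g' X + odd_components ends g' X) = odd (flooding_number ends g b).
Proof.
move=> hsh hbX; have [D [hD hhit <-]] := flooding_witness g; split.
  exact: weak_duality hsh hbX hD hhit.
by rewrite (odd_cert_sum _ _ hD) (odd_card_shifting hsh hD).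
Qed.

End EulerianBound.

Lemma sum_sig_neq (E : finType) (e : E) (F : E -> nat) :
  \sum_(x : E) F x = \sum_(x : {x : E | x != e}) F (val x) + F e.
Proof.
rewrite (bigD1 e) //= addnC; congr (_ + _).
by rewrite (big_sub (op := addn) (fun x : E => x != e) F).
Qed.

Lemma sum_red_edge (E : finType) (e : E) (F : red_edge e -> nat) :
  \sum_(y : red_edge e) F y =
    \sum_(x : {x : E | x != e}) F (inl x) + (F (inr true) + F (inr false)).
Proof. by rewrite big_sumType /= big_bool. Qed.

Lemma cards_and1 (T : finType) (c : bool) (a : T) : #|[set Y | c && (Y == a)]| = c.
Proof.
case: c => /=; last by rewrite -(cards0 T); apply: eq_card => Y; rewrite !inE.
by rewrite -(cards1 a); apply: eq_card => Y; rewrite !inE.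
Qed.

Section Reduction.
Variables (V E : finType) (ends : E -> bool -> V) (b : V) (e : E).
Local Notation rends := (red_ends ends b (e := e)).
Local Notation u := (ends e false).
Local Notation w := (ends e true).

Definition red_signature (g : E -> bool) (gh : red_edge e -> bool) :=
  (forall x, gh (inl x) = g (val x)) /\ gh (inr true) (+) gh (inr false) = g e.

Lemma red_signature_shift g gh v :
  red_signature g gh -> red_signature (shift ends v g) (shift rends v gh).
Proof.
move=> [h1 h2]; split => [x|]; first by rewrite /shift /= h1.
move: h2; rewrite /shift /=.
by case: (u == v); case: (w == v); case: (b == v); case: (gh (inr true));
  case: (gh (inr false)); case: (g e).
Qed.

Lemma red_shifting_lift g gh gh' : red_signature g gh -> is_shifting rends gh gh' ->
  exists g', is_shifting ends g g' /\ red_signature g' gh'.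
Proof.
move=> hred [l ->]; exists (foldl (fun g v => shift ends v g) g l); split; first by exists l.
by elim: l g gh hred => //= v l IH g gh /(red_signature_shift v) /IH.
Qed.

Lemma odd_card_red g gh : red_signature g gh ->
  odd #|[set y | gh y]| = odd #|[set x | g x]|.
Proof.
move=> [h1 h2]; rewrite !card_set_sum sum_red_edge (sum_sig_neq e) -h2.
under eq_bigr do rewrite h1.
by rewrite !oddD; case: (gh (inr true)); case: (gh (inr false)).
Qed.

Lemma flooding_number_red_le g gh : eulerian ends -> u != b -> red_signature g gh ->
  flooding_number rends gh b <= (flooding_number ends g b).+1 ->
  flooding_number rends gh b <= flooding_number ends g b.
Proof.
move=> heul hub hred; rewrite leq_eqVlt ltnS => /orP [/eqP hN|//]; exfalso.
have := @odd_card_flooding_number _ _ rends gh b; rewrite hN => /(_ isT).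
rewrite (odd_card_red hred) (odd_card_flooding_number_eulerian heul hub) /=.
by case: (odd _).
Qed.

(* Edges of G-X and of the reduction minus X differ only by e, since the new edges end at b. *)
Lemma component_red (X : {set V}) v : b \in X ->
  u \notin component rends X v -> w \notin component rends X v ->
  component ends X v = component rends X v.
Proof.
move=> hbX hu hw.
have sub_adj : subrel (adj_out rends X) (adj_out ends X).
  move=> y z /andP [/andP [hy hz] /existsP [[x|[] ] hx]]; rewrite /adj_out hy hz /=.
  - by apply/existsP; exists (val x).
  - by move: hx hy hz => /orP [] /andP [_ /eqP <-]; rewrite hbX.
  - by move: hx hy hz => /orP [] /andP [_ /eqP <-]; rewrite hbX.
apply/setP => t; rewrite !inE; apply/idP/idP; last first.
  by apply: connect_sub => y z /sub_adj /connect1.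
have step y z : adj_out ends X y z ->
    y \in component rends X v -> z \in component rends X v.
  move=> /andP [/andP [hy hz] /existsP [x hx]] hyc.
  have hxe : x != e.
    apply: contraNneq hu => hxe; move: hx hyc; rewrite hxe.
    case/orP => /andP [/eqP hu' /eqP hw']; first by rewrite hu'.
    by rewrite -hw' (negbTE hw).
  have ha : adj_out rends X y z.
    by rewrite /adj_out hy hz; apply/existsP; exists (inl (exist _ x hxe)).
  by move: hyc; rewrite !inE => /connect_trans; apply; apply: connect1.
have hcl : closed (adj_out ends X) (mem (component rends X v)).
  by move=> y z hyz; apply/idP/idP; [exact: step | apply: step; rewrite adj_outC].
by move=> /(closed_connect hcl); rewrite component_refl inE => /esym.
Qed.

Lemma odd_set_red (Y : {set V}) g gh : red_signature g gh -> b \notin Y ->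
  u \notin Y -> w \notin Y -> is_odd_set rends gh Y = is_odd_set ends g Y.
Proof.
move=> [h1 _] hb hu hw; rewrite /is_odd_set /wcount !inner_cut_touchesE.
have -> : #|[set x in [set x | touches rends Y x] | gh x]|
    = #|[set x in [set x | touches ends Y x] | g x]|.
  rewrite !card_set_sum sum_red_edge (sum_sig_neq e) !inE /touches /=.
  rewrite (negbTE hu) (negbTE hw) (negbTE hb) /= !addn0.
  by apply: eq_bigr => x _; rewrite !inE h1.
suff -> : #|cut_edges rends Y| = #|cut_edges ends Y| by [].
rewrite -[#|cut_edges rends Y|]cardsE -[#|cut_edges ends Y|]cardsE !card_set_sum.
rewrite sum_red_edge (sum_sig_neq e) !inE /= (negbTE hb) (negbTE hu) (negbTE hw) /= !addn0.
by apply: eq_bigr => x _; rewrite !inE.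
Qed.

(* Only the components of the reduction containing u or w can be new odd components. *)
Lemma odd_components_red_le (X : {set V}) g gh : b \in X -> red_signature g gh ->
  odd_components rends gh X <= odd_components ends g X + (u \notin X) + (w \notin X).
Proof.
move=> hbX hred; rewrite /odd_components.
have hsub : [set Y | is_component_out rends X Y && is_odd_set rends gh Y] \subset
   [set Y | is_component_out ends X Y && is_odd_set ends g Y] :|:
   ([set Y | (u \notin X) && (Y == component rends X u)] :|:
    [set Y | (w \notin X) && (Y == component rends X w)]).
  apply/subsetP => Y; rewrite !inE !is_component_outE => /andP [hY hodd].
  move: (hY) => /imsetP [v]; rewrite inE => hv hYv.
  case hu' : (u \in Y).
    have huY : u \in component rends X v by rewrite -hYv.
    by rewrite (component_notin hv huY) hYv (component_eq huY) eqxx !orbT.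
  case hw' : (w \in Y).
    have hwY : w \in component rends X v by rewrite -hYv.
    by rewrite (component_notin hv hwY) hYv (component_eq hwY) eqxx !orbT.
  have hbY : b \notin Y.
    by rewrite hYv; apply/negP => /(component_notin hv); rewrite hbX.
  rewrite -(odd_set_red hred hbY (negbT hu') (negbT hw')) hodd andbT.
  by rewrite hYv -component_red ?component_in_components // -hYv ?hu' ?hw'.
apply: (leq_trans (subset_leq_card hsub)); apply: (leq_trans (leq_card_setU _ _)).
by rewrite -addnA leq_add2l; apply: (leq_trans (leq_card_setU _ _)); rewrite !cards_and1.
Qed.

Lemma wcount_inner_red_ge (X : {set V}) g gh : b \in X -> red_signature g gh ->
  wcount g (inner_edges ends X) <= wcount gh (inner_edges rends X).
Proof.
move=> hbX [h1 h2]; rewrite /wcount !card_set_sum sum_red_edge (sum_sig_neq e).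
have -> : \sum_(x : {x : E | x != e}) ((inl x \in inner_edges rends X) && gh (inl x) : nat)
    = \sum_(x : {x : E | x != e}) ((val x \in inner_edges ends X) && g (val x) : nat).
  by apply: eq_bigr => x _; rewrite !inE h1.
rewrite leq_add2l !inE /= hbX !andbT.
by move: h2; case: (gh (inr true)); case: (gh (inr false)); case: (g e);
  case: (u \in X); case: (w \in X).
Qed.

Lemma half_cut_red (X : {set V}) : b \in X ->
  #|cut_edges ends X|./2 + (u \notin X) + (w \notin X) <= #|cut_edges rends X|./2 + 1.
Proof.
move=> hbX.
have hcut : #|cut_edges rends X| + ((u \in X) (+) (w \in X))
    = #|cut_edges ends X| + (u \notin X) + (w \notin X).
  rewrite -[#|cut_edges rends X|]cardsE -[#|cut_edges ends X|]cardsE !card_set_sum.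
  rewrite sum_red_edge (sum_sig_neq e) !inE /= hbX -!addnA; congr (_ + _).
    by apply: eq_bigr => x _; rewrite !inE.
  by rewrite !eqb_id negb_eqb addnA addnC.
move: hcut; move: #|cut_edges ends X| #|cut_edges rends X| => c c'.
by case: (u \in X); case: (w \in X) => /= hcut;
  [have -> : c' = c | have -> : c' = c | have -> : c' = c | have -> : c' = c.+2];
  rewrite /=; lia.
Qed.

Lemma cert_sum_red_le (X : {set V}) g gh : b \in X -> red_signature g gh ->
  cert_sum ends g X + odd_components rends gh X
    <= cert_sum rends gh X + odd_components ends g X + 1.
Proof.
move=> hbX hred; rewrite /cert_sum.
have := wcount_inner_red_ge hbX hred; have := half_cut_red hbX.
have := odd_components_red_le hbX hred; lia.
Qed.

End Reduction.

Lemma natz_sub_eq (n s o : nat) : (n%:Z = s%:Z - o%:Z)%R <-> n + o = s.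
Proof.
split=> [h|<-]; last by rewrite PoszD GRing.addrK.
by apply/eqP; rewrite -eqz_nat PoszD h GRing.subrK.
Qed.

Lemma parity_squeeze (n s o n' s' o' : nat) :
  n + o <= s -> odd (s + o) = odd n -> s + o' <= s' + o + 1 -> n' + o' = s' -> n' <= n ->
  n + o = s.
Proof.
move=> hlo hodd hcmp hs' hn; have : s <= (n + o).+1 by lia.
rewrite leq_eqVlt ltnS => /orP [/eqP hs|hhi]; last by apply/eqP; rewrite eqn_leq hlo.
by move: hodd; rewrite hs addSn -addnA addnn /= oddD odd_double addbF; case: (odd n).
Qed.

Unset Implicit Arguments.

Theorem mainTheorem7 (V E : finType) (ends : E -> bool -> V) (gam : E -> bool)
    (b : V) (e : E) (ghat : red_edge e -> bool) :
  eulerian ends ->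
  ends e false != b -> ends e true != b ->
  (forall x : {x : E | x != e}, ghat (inl x) = gam (val x)) ->
  ghat (inr true) (+) ghat (inr false) = gam e ->
  (flooding_number (red_ends ends b (e := e)) ghat b
     <= (flooding_number ends gam b).+1)%N ->
  has_certificate (red_ends ends b (e := e)) ghat b ->
  has_certificate ends gam b.
Proof.
move=> heul hub hwb hinl hinr hle [X [gh' [hsh [hbX /natz_sub_eq hcert]]]].
have hred : red_signature gam ghat by split.
have [g' [hsh' hred']] := red_shifting_lift hred hsh.
exists X, g'; split=> //; split=> //; apply/natz_sub_eq.
have [hdual hodd] := flooding_number_cert_sum heul hub hsh' hbX.
apply: parity_squeeze hdual hodd (cert_sum_red_le ends hbX hred') hcert _.
exact: (flooding_number_red_le heul hub hred hle).
Qed.
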